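(* Fix a set $\mathcal{X}$, a measure space $\mathcal{Y}$, and a real number $\alpha>1$. Suppose that for each $y\in\mathcal{Y}$ a topology is given on the fibre $\mathcal{X}\times\{y\}$, and that $\phi:\mathcal{X}\to\mathcal{X}$ is a function such that the induced map $(x,y)\mapsto(\phi(x),y)$ is continuous on each such fibre. Suppose further that $\gamma:\mathcal{X}\times\mathcal{Y}\to\mathbb{R}$ is a function which (1) is bounded; (2) is continuous on the fibres of $\mathcal{X}\times\mathcal{Y}\to\mathcal{Y}$; (3) is measurable on the fibres of $\mathcal{X}\times\mathcal{Y}\to\mathcal{X}$; and (4) vanishes off $\mathcal{X}\times W$ for some set $W\subseteq\mathcal{Y}$ of finite measure. Then there exists a unique bounded function $\hat{\gamma}:\mathcal{X}\times\mathcal{Y}\to\mathbb{R}$, continuous in the first coordinate and integrable in the second, with \[\gamma(x,y)=\hat{\gamma}(\phi(x),y)-\alpha\hat{\gamma}(x,y)\] for all $x\in\mathcal{X}$ and $y\in\mathcal{Y}$. *)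

From HB Require Import structures.
From mathcomp Require Import all_boot all_order all_algebra.
From mathcomp Require Import all_classical all_reals all_analysis.
Set Implicit Arguments. Unset Strict Implicit. Unset Printing Implicit Defensive.
Import Order.TTheory GRing.Theory Num.Theory numFieldNormedType.Exports.
Local Open Scope classical_set_scope.
Local Open Scope ring_scope.

Definition is_topology (X : Type) (O : set (set X)) : Prop :=
  [/\ O setT,
      (forall A B, O A -> O B -> O (A `&` B)) &
      (forall F : set (set X), F `<=` O -> O (\bigcup_(A in F) A))].

Definition cont_self (X : Type) (O : set (set X)) (f : X -> X) : Prop :=
  forall A, O A -> O (f @^-1` A).

Definition cont_real (X : Type) (R : realType) (O : set (set X)) (g : X -> R) : Prop :=
  forall A : set R, open A -> O (g @^-1` A).

Definition bounded_fun2 (X Y : Type) (R : realType) (g : X * Y -> R) : Prop :=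
  exists M : R, forall x y, `|g (x, y)| <= M.

From HB Require Import structures.
From mathcomp Require Import all_boot all_order all_algebra.
From mathcomp Require Import all_classical all_reals all_analysis.
From mathcomp Require Import ring measurable_realfun.
Import Order.TTheory GRing.Theory Num.Theory numFieldNormedType.Exports.
Set Implicit Arguments. Unset Strict Implicit. Unset Printing Implicit Defensive.
Local Open Scope classical_set_scope.
Local Open Scope ring_scope.

(* With b := 1/alpha the equation reads
   ghat (x, y) = b (- gamma (x, y) + ghat (phi x, y)), which is solved by the
   series ghat (x, y) = - sum_k b^(k+1) gamma (phi^k x, y).  Its partial sums
   are continuous in x and measurable in y, and converge uniformly at a
   geometric rate, so the sum inherits both properties; it vanishes wherever
   gamma (., y) does, hence off W, which gives integrability.  Uniqueness: the
   difference h of two bounded solutions satisfies h (phi x) = alpha h x, so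
   |h x| = b^n |h (phi^n x)| <= b^n C for every n. *)

Lemma exists_geometric_lt (R : realType) (b c e : R) :
  0 <= b < 1 -> 0 < e -> exists n : nat, c * b ^+ n < e.
Proof.
move=> /andP[b_ge0 b_lt1] e_gt0.
have b_norm_lt1 : `|b| < 1 by rewrite ger0_norm.
have /cvgrPdist_lt/(_ e e_gt0) [N _ hN] := cvg_geometric c b_norm_lt1.
exists N; apply: le_lt_trans (hN N (leqnn N)).
by rewrite /geometric /= sub0r normrN ler_norm.
Qed.

Lemma eq0_geometric_bound (R : realType) (b c a : R) :
  0 <= b < 1 -> (forall n, `|a| <= c * b ^+ n) -> a = 0.
Proof.
move=> b01 ha; apply/eqP; apply/negPn/negP => a_neq0.
have [n hn] : exists n, c * b ^+ n < `|a| by apply: exists_geometric_lt; rewrite ?normr_gt0.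
by have := ha n; rewrite leNgt hn.
Qed.

Lemma expanding_bounded_eq0 (R : realType) (X : Type) (alpha C : R)
    (phi : X -> X) (h : X -> R) :
  1 < alpha -> (forall x, `|h x| <= C) -> (forall x, h (phi x) = alpha * h x) ->
  forall x, h x = 0.
Proof.
move=> alpha_gt1 h_bound h_phi x.
have alpha_gt0 : 0 < alpha := lt_trans ltr01 alpha_gt1.
have b_ge0 : 0 <= alpha^-1 by rewrite invr_ge0 ltW.
apply: (@eq0_geometric_bound _ alpha^-1 C); first by rewrite b_ge0 invf_lt1.
move=> n; elim: n x => [|n IH] x; first by rewrite mulr1.
have -> : h x = alpha^-1 * h (phi x) by rewrite h_phi mulKf ?gt_eqF.
by rewrite normrM ger0_norm // exprS mulrCA ler_wpM2l.
Qed.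

Section EpsContinuity.
Variables (R : realType) (X : Type) (O : set (set X)).

(* The fibre topologies are bare families of open sets rather than
   topologicalType instances, so continuity into R is handled in this
   epsilon form, equivalent to cont_real for a topology. *)
Definition eps_continuous (f : X -> R) : Prop :=
  forall x0 (e : R), 0 < e ->
    exists U, [/\ O U, U x0 & forall x, U x -> `|f x - f x0| < e].

Lemma cont_real_eps_continuous (f : X -> R) : cont_real O f -> eps_continuous f.
Proof.
move=> f_cont x0 e e_gt0; exists (f @^-1` ball (f x0) e); split.
- exact/f_cont/ball_open.
- exact: ballxx.
- by move=> x; rewrite /= /ball /= distrC.
Qed.

Lemma eps_continuous_cont_real (f : X -> R) :
  is_topology O -> eps_continuous f -> cont_real O f.
Proof.
move=> [_ _ O_bigcup] f_cont A A_open.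
have -> : f @^-1` A = \bigcup_(U in [set U | O U /\ U `<=` f @^-1` A]) U.
  apply/seteqP; split => [x Afx|x [U [_ UA] Ux]]; last exact: UA.
  have /nbhs_ballP [e /= e_gt0 fxA] := A_open _ Afx.
  have [U [OU Ux f_near]] := f_cont x e e_gt0.
  exists U => //; split => // z Uz; apply: fxA.
  by rewrite /ball /= distrC f_near.
by apply: O_bigcup => U [].
Qed.

Lemma eps_continuous_cst (c : R) : O setT -> eps_continuous (fun=> c).
Proof. by move=> OT x0 e e_gt0; exists setT; split => // x _; rewrite subrr normr0. Qed.

Lemma eps_continuousN (f : X -> R) :
  eps_continuous f -> eps_continuous (fun x => - f x).
Proof.
move=> f_cont x0 e e_gt0; have [U [OU Ux f_near]] := f_cont x0 e e_gt0.
by exists U; split => // x /f_near; rewrite -opprD normrN.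
Qed.

Lemma eps_continuousD (f h : X -> R) : (forall A B, O A -> O B -> O (A `&` B)) ->
  eps_continuous f -> eps_continuous h -> eps_continuous (fun x => f x + h x).
Proof.
move=> OI f_cont h_cont x0 e e_gt0.
have e2_gt0 : 0 < e / 2 by rewrite divr_gt0.
have [U [OU Ux f_near]] := f_cont x0 _ e2_gt0.
have [V [OV Vx h_near]] := h_cont x0 _ e2_gt0.
exists (U `&` V); split => [||x [Ux' Vx']]; [exact: OI | by [] |].
have -> : f x + h x - (f x0 + h x0) = (f x - f x0) + (h x - h x0) by ring.
apply: le_lt_trans (ler_normD _ _) _.
by rewrite (splitr e) ltrD ?f_near ?h_near.
Qed.

Lemma eps_continuousMl (c : R) (f : X -> R) :
  eps_continuous f -> eps_continuous (fun x => c * f x).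
Proof.
move=> f_cont x0 e e_gt0.
have c1_gt0 : 0 < `|c| + 1 by rewrite ltr_wpDl.
have [U [OU Ux f_near]] := f_cont x0 _ (divr_gt0 e_gt0 c1_gt0).
exists U; split => // x /f_near fx_near.
rewrite -mulrBr normrM; apply: le_lt_trans (_ : `|c| * (e / (`|c| + 1)) < e).
  exact/ler_wpM2l/ltW.
by rewrite mulrCA gtr_pMr // ltr_pdivrMr // mul1r ltrDl.
Qed.

Lemma eps_continuous_comp (phi : X -> X) (f : X -> R) :
  cont_self O phi -> eps_continuous f -> eps_continuous (fun x => f (phi x)).
Proof.
move=> phi_cont f_cont x0 e e_gt0; have [U [OU Ux f_near]] := f_cont (phi x0) e e_gt0.
by exists (phi @^-1` U); split => //; [exact: phi_cont | move=> x /f_near].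
Qed.

Lemma eps_continuous_uniform_limit (f : X -> R) :
  (forall A B, O A -> O B -> O (A `&` B)) ->
  (forall e : R, 0 < e -> exists h, eps_continuous h /\ forall x, `|f x - h x| <= e) ->
  eps_continuous f.
Proof.
move=> OI f_approx x0 e e_gt0.
have e3_gt0 : 0 < e / 3 by rewrite divr_gt0.
have [h [h_cont f_h]] := f_approx _ e3_gt0.
have [U [OU Ux h_near]] := h_cont x0 _ e3_gt0.
exists U; split => // x Ux'.
have -> : f x - f x0 = (f x - h x) + (h x - h x0) - (f x0 - h x0) by ring.
have -> : e = e / 3 + e / 3 + e / 3 by field.
apply: le_lt_trans (ler_normB _ _) _; apply: ltr_leD => //.
by apply: le_lt_trans (ler_normD _ _) _; rewrite ler_ltD ?h_near.
Qed.

End EpsContinuity.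

Section OrbitSeries.
Variables (R : realType) (X : Type) (b : R) (phi : X -> X) (g : X -> R).

Fixpoint orbit_sum (n : nat) : X -> R :=
  match n with
  | 0 => fun=> 0
  | n.+1 => fun x => b * (g x + orbit_sum n (phi x))
  end.

Definition orbit_series (x : X) : R := lim ((fun n => orbit_sum n x) @ \oo).

Lemma orbit_sumD n k x :
  orbit_sum (n + k) x = orbit_sum n x + b ^+ n * orbit_sum k (iter n phi x).
Proof.
elim: n x => [|n IH] x /=; first by rewrite add0r mul1r.
by rewrite IH -iterSr /= exprSr; ring.
Qed.

Lemma orbit_series_eq0 : (forall x, g x = 0) -> forall x, orbit_series x = 0.
Proof.
move=> g0 x; have sum0 n y : orbit_sum n y = 0.
  by elim: n y => [|n IH] y //=; rewrite g0 IH addr0 mulr0.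
by rewrite /orbit_series (_ : (fun n => _) = cst 0) ?lim_cst //; apply/funext.
Qed.

Variable M : R.
Hypotheses (b_ge0 : 0 <= b) (b_lt1 : b < 1) (M_ge0 : 0 <= M).
Hypothesis g_bound : forall x, `|g x| <= M.

(* The fixed point of t |-> b * (M + t); it bounds every partial sum. *)
Let B := b * M / (1 - b).

Let B_ge0 : 0 <= B.
Proof. by rewrite divr_ge0 ?mulr_ge0 // subr_ge0 ltW. Qed.

Let b01 : 0 <= b < 1. Proof. by rewrite b_ge0 b_lt1. Qed.

Lemma orbit_sum_bound n x : `|orbit_sum n x| <= B.
Proof.
have B_fixed : b * (M + B) = B by rewrite /B; field; rewrite subr_eq0 gt_eqF.
elim: n x => [|n IH] x /=; first by rewrite normr0.
rewrite normrM ger0_norm // -B_fixed ler_wpM2l //.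
by apply: le_trans (ler_normD _ _) _; apply: lerD.
Qed.

Lemma orbit_sum_tail n k x :
  `|orbit_sum (n + k) x - orbit_sum n x| <= b ^+ n * B.
Proof.
rewrite orbit_sumD addrAC subrr add0r normrM ger0_norm ?exprn_ge0 //.
by rewrite ler_wpM2l ?exprn_ge0 ?orbit_sum_bound.
Qed.

Lemma orbit_sum_cvg x : cvg ((fun n => orbit_sum n x) @ \oo).
Proof.
apply/cauchy_cvgP/cauchy_exP => e e_gt0.
have [n hn] := exists_geometric_lt B b01 e_gt0.
exists (orbit_sum n x), n => // m /= n_le_m.
rewrite /ball /= -(subnKC n_le_m) distrC; apply: le_lt_trans hn.
by rewrite mulrC orbit_sum_tail.
Qed.

Lemma orbit_series_sub_sum n x : `|orbit_series x - orbit_sum n x| <= b ^+ n * B.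
Proof.
apply/ler_addgt0Pr => e e_gt0.
have sum_to_series : (fun m => orbit_sum m x) @ \oo --> orbit_series x.
  exact: orbit_sum_cvg.
have /cvgrPdist_lt/(_ e e_gt0) [N _ hN] := sum_to_series.
have := hN (n + N)%N (leq_addl _ _); set L := orbit_series x => near_L.
have -> : L - orbit_sum n x =
  (L - orbit_sum (n + N) x) + (orbit_sum (n + N) x - orbit_sum n x) by ring.
apply: le_trans (ler_normD _ _) _.
by rewrite addrC lerD ?orbit_sum_tail ?ltW.
Qed.

Lemma orbit_series_bound x : `|orbit_series x| <= B.
Proof. by have := orbit_series_sub_sum 0 x; rewrite subr0 expr0 mul1r. Qed.

Lemma orbit_seriesE x : orbit_series x = b * (g x + orbit_series (phi x)).
Proof.
apply/eqP; rewrite -subr_eq0; apply/eqP.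
apply: (@eq0_geometric_bound _ b (2 * b * B)) => // n.
have := orbit_series_sub_sum n.+1 x; have := orbit_series_sub_sum n (phi x) => /=.
set L1 := orbit_series x; set L2 := orbit_series (phi x) => near_L2 near_L1.
have -> : L1 - b * (g x + L2) =
  (L1 - b * (g x + orbit_sum n (phi x))) - b * (L2 - orbit_sum n (phi x)) by ring.
have -> : 2 * b * B * b ^+ n = b ^+ n.+1 * B + b * (b ^+ n * B) by rewrite exprS; ring.
apply: le_trans (ler_normB _ _) _.
by rewrite lerD // normrM ger0_norm // ler_wpM2l.
Qed.

Lemma eps_continuous_orbit_series (O : set (set X)) :
  is_topology O -> cont_self O phi -> eps_continuous O g ->
  eps_continuous O orbit_series.
Proof.
move=> [OT OI _] phi_cont g_cont.
have sum_cont n : eps_continuous O (orbit_sum n).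
  elim: n => [|n IH] /=; first exact: eps_continuous_cst.
  exact/eps_continuousMl/eps_continuousD/eps_continuous_comp.
apply: eps_continuous_uniform_limit => // e e_gt0.
have [n hn] := exists_geometric_lt B b01 e_gt0.
exists (orbit_sum n); split => // x.
by apply: le_trans (orbit_series_sub_sum n x) _; rewrite mulrC ltW.
Qed.

End OrbitSeries.

Section OrbitSeriesMeasurable.
Variables (R : realType) (X : Type) (d : measure_display) (Y : measurableType d).
Variables (b : R) (phi : X -> X) (g : Y -> X -> R).
Hypothesis g_meas : forall x, measurable_fun setT (fun y => g y x).

Lemma measurable_orbit_sum n x :
  measurable_fun setT (fun y => orbit_sum b phi (g y) n x).
Proof.
elim: n x => [|n IH] x /=; first exact: measurable_cst.
by apply: (measurable_funM (f := cst b)) => //; apply: measurable_funD.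
Qed.

Lemma measurable_orbit_series (M : R) :
  0 <= b -> b < 1 -> 0 <= M -> (forall y x, `|g y x| <= M) ->
  forall x, measurable_fun setT (fun y => orbit_series b phi (g y) x).
Proof.
move=> b_ge0 b_lt1 M_ge0 g_bound x.
apply: (measurable_fun_cvg (h := fun n y => orbit_sum b phi (g y) n x)) => [n|y _].
  exact: measurable_orbit_sum.
exact: (orbit_sum_cvg b_ge0 b_lt1 M_ge0 (g_bound y)).
Qed.

End OrbitSeriesMeasurable.

Lemma integrable_bounded_finite_support (R : realType) (d : measure_display)
    (Y : measurableType d) (mu : {measure set Y -> \bar R}) (W : set Y)
    (f : Y -> R) (C : R) :
  measurable W -> (mu W < +oo)%E -> measurable_fun setT f ->
  (forall y, `|f y| <= C) -> (forall y, ~ W y -> f y = 0) ->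
  mu.-integrable setT (EFin \o f).
Proof.
move=> mW muW f_meas f_bound f_supp.
apply/integrableP; split; first exact/measurable_EFinP.
apply: (@le_lt_trans _ _ (\int[mu]_(y in setT) (`|C|%:E * (\1_W y : R)%:E))%E).
  apply: ge0_le_integral => //.
  - exact/measurableT_comp/measurable_EFinP.
  - by apply/measurable_funeM/measurable_EFinP; exact: measurable_indic.
  move=> y _ /=; rewrite -EFinM lee_fin indicE.
  have [Wy|nWy] := pselect (W y).
    by rewrite mem_set // mulr1 (le_trans (f_bound y)) ?ler_norm.
  by rewrite f_supp // normr0 memNset // mulr0.
rewrite ge0_integralZl //; last by apply/measurable_EFinP; exact: measurable_indic.
by rewrite integral_indic // setIT lte_mul_pinfty.
Qed.

Theorem mainTheorem12 (R : realType) (X : Type) (d : measure_display)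
  (Y : measurableType d) (mu : {measure set Y -> \bar R}) (alpha : R)
  (tau : Y -> set (set X)) (phi : X -> X) (gamma : X * Y -> R) :
  1 < alpha ->
  (forall y, is_topology (tau y)) ->
  (forall y, cont_self (tau y) phi) ->
  bounded_fun2 gamma ->
  (forall y, cont_real (tau y) (fun x => gamma (x, y))) ->
  (forall x, measurable_fun setT (fun y => gamma (x, y))) ->
  (exists W : set Y, [/\ measurable W, (mu W < +oo)%E &
                        forall x y, ~ W y -> gamma (x, y) = 0]) ->
  exists ghat : X * Y -> R,
    (bounded_fun2 ghat /\
     (forall y, cont_real (tau y) (fun x => ghat (x, y))) /\
     (forall x, mu.-integrable setT (fun y => (ghat (x, y))%:E)) /\
     (forall x y, gamma (x, y) = ghat (phi x, y) - alpha * ghat (x, y))) /\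
    (forall g : X * Y -> R,
      bounded_fun2 g ->
      (forall y, cont_real (tau y) (fun x => g (x, y))) ->
      (forall x, mu.-integrable setT (fun y => (g (x, y))%:E)) ->
      (forall x y, gamma (x, y) = g (phi x, y) - alpha * g (x, y)) ->
      g = ghat).
Proof.
move=> alpha_gt1 tau_top phi_cont [M0 gamma_bound] gamma_cont gamma_meas
  [W [mW muW gamma_supp]].
have alpha_gt0 : 0 < alpha := lt_trans ltr01 alpha_gt1.
have b_ge0 : 0 <= alpha^-1 by rewrite invr_ge0 ltW.
have b_lt1 : alpha^-1 < 1 by rewrite invf_lt1.
have M_ge0 : 0 <= `|M0| := normr_ge0 M0.
pose g y x := - gamma (x, y).
have g_bound y x : `|g y x| <= `|M0|.
  by rewrite normrN (le_trans (gamma_bound x y)) ?ler_norm.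
pose ghat p := orbit_series alpha^-1 phi (g p.2) p.1.
pose B := alpha^-1 * `|M0| / (1 - alpha^-1).
have ghat_bound x y : `|ghat (x, y)| <= B.
  exact: (orbit_series_bound phi b_ge0 b_lt1 M_ge0 (g_bound y)).
have ghatE x y : gamma (x, y) = ghat (phi x, y) - alpha * ghat (x, y).
  rewrite [ghat (x, y)](orbit_seriesE phi b_ge0 b_lt1 M_ge0 (g_bound y)).
  by rewrite mulrA mulfV ?gt_eqF // mul1r /ghat /g /=; ring.
exists ghat; split; [split; [|split; [|split]] |] => //.
- by eexists; apply: ghat_bound.
- move=> y; apply: eps_continuous_cont_real (tau_top y) _.
  apply: (eps_continuous_orbit_series b_ge0 b_lt1 M_ge0 (g_bound y) (tau_top y) (phi_cont y)).
  exact/eps_continuousN/cont_real_eps_continuous.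
- move=> x; apply: integrable_bounded_finite_support mW muW _ (ghat_bound x) _.
    have g_meas x' : measurable_fun setT (g^~ x') by apply: measurable_funN.
    exact: (measurable_orbit_series phi g_meas b_ge0 b_lt1 M_ge0 g_bound).
  move=> y nWy; apply: orbit_series_eq0 => x'.
  by rewrite /g gamma_supp ?oppr0.
move=> g' [C g'_bound] _ _ g'E; apply/funext => -[x y]; apply/subr0_eq.
apply: (@expanding_bounded_eq0 _ _ alpha (C + B) phi (fun z => g' (z, y) - ghat (z, y)))
  => // z.
- by rewrite (le_trans (ler_normB _ _)) ?lerD ?ghat_bound.
- have -> : g' (phi z, y) = gamma (z, y) + alpha * g' (z, y) by rewrite g'E; ring.
  by rewrite ghatE; ring.
Qed.
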